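(* Every statistically convergent sequence in an $S$-metric space $(X,S)$ has a convergent subsequence.
   Context: An $S$-metric on a nonempty set $X$ is a function $S:X^3\to[0,\infty)$ such that for all $x,y,z,a\in X$: $S(x,y,z)=0$ if and only if $x=y=z$, and $S(x,y,z)\le S(x,x,a)+S(y,y,a)+S(z,z,a)$. A sequence $\{y_n\}$ converges to $y$ if for every $\varepsilon>0$ there is $k$ with $S(y_n,y_n,y)<\varepsilon$ for all $n\ge k$. For $B\subset\mathbb N$ the natural density is $\delta(B)=\lim_{n\to\infty}\frac{|\{k\in B:k\le n\}|}{n}$ when the limit exists. A sequence $\{x_n\}$ is statistically convergent to $x\in X$ if for every $\varepsilon>0$, $\delta(\{n\in\mathbb N: S(x_n,x_n,x)\ge\varepsilon\})=0$. *)

From Stdlib Require Import Reals Lra Lia ClassicalDescription.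
Open Scope R_scope.

Definition is_S_metric {X : Type} (S : X -> X -> X -> R) : Prop :=
  (forall x y z, 0 <= S x y z) /\
  (forall x y z, S x y z = 0 <-> (x = y /\ y = z)) /\
  (forall x y z a, S x y z <= S x x a + S y y a + S z z a).

Definition S_converges {X : Type} (S : X -> X -> X -> R) (y : nat -> X) (l : X) : Prop :=
  forall eps, 0 < eps -> exists k, forall n, (k <= n)%nat -> S (y n) (y n) l < eps.

(* Natural numbers of the paper are {1,2,...}; a sequence x_1, x_2, ... is
   represented by x : nat -> X with x_k := x k for k >= 1 (x 0 is unused
   for density purposes, and density ignores finitely many indices anyway). *)

Fixpoint count_upto (B : nat -> Prop) (n : nat) : nat :=
  match n with
  | O => O
  | S m => (count_upto B m + (if excluded_middle_informative (B (S m)) then 1 else 0))%nat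
  end.

Definition has_density (B : nat -> Prop) (d : R) : Prop :=
  Un_cv (fun n => INR (count_upto B (S n)) / INR (S n)) d.

Definition stat_converges {X : Type} (S : X -> X -> X -> R) (x : nat -> X) (l : X) : Prop :=
  forall eps, 0 < eps -> has_density (fun n => (1 <= n)%nat /\ S (x n) (x n) l >= eps) 0.

(* A set of natural density zero cannot contain every large integer, so for
   each k there are arbitrarily late indices n with S(x_n, x_n, l) < 1/(k+1).
   Choosing such indices in increasing order yields a subsequence converging
   to l itself. *)

From Stdlib Require Import Reals Lra Lia ClassicalEpsilon.
Open Scope R_scope.

Lemma count_upto_ge_cofinite (B : nat -> Prop) (N : nat) :
  (forall m, (N < m)%nat -> B m) -> forall n, (n - N <= count_upto B n)%nat.
Proof.
  intros HB n; induction n as [|m IH]; cbn [count_upto]; [lia|].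
  destruct (ClassicalDescription.excluded_middle_informative (B (S m))) as [h|h].
  - lia.
  - assert (~ (N < S m)%nat) by (intro c; apply h, HB, c). lia.
Qed.

Lemma density0_complement_unbounded (B : nat -> Prop) (N : nat) :
  has_density B 0 -> exists n, (N < n)%nat /\ ~ B n.
Proof.
  intros Hd. apply Classical_Prop.NNPP. intros Hn.
  assert (HB : forall m, (N < m)%nat -> B m).
  { intros m Hm. apply Classical_Prop.NNPP. intro h. apply Hn. exists m; auto. }
  destruct (Hd (/2)) as [K HK]; [lra|].
  set (n := (K + 2 * N + 2)%nat).
  specialize (HK n ltac:(unfold n; lia)).
  unfold Rdist in HK. rewrite Rminus_0_r in HK.
  assert (Hpos : 0 < INR (S n)) by (apply lt_0_INR; lia).
  assert (Hcount : INR (S n) - INR N <= INR (count_upto B (S n))).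
  { rewrite <- minus_INR by (unfold n; lia).
    apply le_INR, count_upto_ge_cofinite, HB. }
  assert (Hlarge : 2 * INR N + 2 <= INR (S n)).
  { replace 2 with (INR 2) by (simpl; lra). rewrite <- mult_INR, <- plus_INR.
    apply le_INR; unfold n; lia. }
  rewrite Rabs_right in HK.
  2:{ apply Rle_ge, Rmult_le_pos; [apply pos_INR | left; apply Rinv_0_lt_compat, Hpos]. }
  apply (Rmult_lt_compat_r (INR (S n))) in HK; [|exact Hpos].
  unfold Rdiv in HK. rewrite Rmult_assoc, Rinv_l, Rmult_1_r in HK by lra.
  lra.
Qed.

Lemma stat_converges_frequently_close {X : Type} (S : X -> X -> X -> R)
    (x : nat -> X) (l : X) :
  stat_converges S x l ->
  forall eps N, 0 < eps -> exists n, (N < n)%nat /\ S (x n) (x n) l < eps.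
Proof.
  intros Hstat eps N He.
  destruct (density0_complement_unbounded _ N (Hstat eps He)) as [n [Hn Hfar]].
  exists n; split; [exact Hn|].
  apply Rnot_ge_lt. intro c. apply Hfar. split; [lia | exact c].
Qed.

Lemma strictly_increasing_selection (P : nat -> nat -> Prop) :
  (forall k N, exists n, (N < n)%nat /\ P k n) ->
  exists phi : nat -> nat, (forall k, (phi k < phi (S k))%nat) /\ forall k, P k (phi k).
Proof.
  intros HP.
  destruct (choice (fun kN n => (snd kN < n)%nat /\ P (fst kN) n)) as [f Hf].
  { intros [k N]; apply HP. }
  exists (fix phi k := match k with O => f (O, O) | S j => f (S j, phi j) end).
  split.
  - intros k. apply (Hf (S k, _)).
  - intros [|k]; [apply (Hf (O, O)) | apply (Hf (S k, _))].
Qed.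

Lemma inv_INR_S_eventually_lt (eps : R) :
  0 < eps -> exists K, forall k, (K <= k)%nat -> / INR (S k) < eps.
Proof.
  intros He. destruct (archimed_cor1 eps He) as [K [HK HK0]].
  exists K; intros k Hk.
  apply Rle_lt_trans with (/ INR K); [|exact HK].
  apply Rinv_le_contravar; [apply lt_0_INR, HK0 | apply le_INR; lia].
Qed.

Theorem corollary3p1 (X : Type) (S : X -> X -> X -> R) (x : nat -> X) (l : X) :
  is_S_metric S ->
  stat_converges S x l ->
  exists (phi : nat -> nat) (y : X),
    (forall k, (phi k < phi (Datatypes.S k))%nat) /\
    S_converges S (fun k => x (phi k)) y.
Proof.
  intros _ Hstat.
  destruct (strictly_increasing_selection
              (fun k n => S (x n) (x n) l < / INR (Datatypes.S k)))
    as [phi [Hinc Hclose]].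
  { intros k N. apply stat_converges_frequently_close; [exact Hstat|].
    apply Rinv_0_lt_compat, lt_0_INR; lia. }
  exists phi, l; split; [exact Hinc|].
  intros eps He. destruct (inv_INR_S_eventually_lt eps He) as [K HK].
  exists K; intros k Hk.
  apply Rlt_trans with (/ INR (Datatypes.S k)); [apply Hclose | apply HK, Hk].
Qed.
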